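(* There exist a constant $c>1$ and trees $T$ with arbitrarily large total domination number $\gamma_t=\gamma_t(T)$ such that, with $n$ the order of $T$, $$\Gamma_t(T)\ge c^{\gamma_t}\left(\frac{n-\frac{\gamma_t}{2}}{\frac{\gamma_t}{2}}\right)^{\gamma_t/2}.$$
   Context: For a graph $G$ without isolated vertices, a set $D\subseteq V(G)$ is total dominating if every vertex of $G$ has a neighbour in $D$. The total domination number $\gamma_t(G)$ is the minimum size of a total dominating set, and $\Gamma_t(G)$ is the number of total dominating sets of size $\gamma_t(G)$. *)

From mathcomp Require Import all_boot.
Set Implicit Arguments. Unset Strict Implicit. Unset Printing Implicit Defensive.

Section Graphs.
Variable T : finType.
Variable e : rel T.

Definition simple_graph : Prop := symmetric e /\ irreflexive e.

Definition connected_graph : Prop := forall x y : T, connect e x y.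

Definition has_cycle : Prop :=
  exists c : seq T, [&& uniq c, 2 < size c & cycle e c].

Definition is_tree : Prop :=
  [/\ simple_graph, connected_graph & ~ has_cycle].

Definition no_isolated : Prop := forall v : T, exists u : T, e v u.

Definition total_dominating (D : {set T}) : bool :=
  [forall v, [exists u in D, e v u]].

(* total domination number: minimum size of a total dominating set
   (equals #|T| by convention if no total dominating set exists, which
   never happens for graphs without isolated vertices) *)
Definition gamma_t : nat :=
  \big[minn/#|T|]_(D : {set T} | total_dominating D) #|D|.

Definition Gamma_t : nat :=
  #|[set D : {set T} | total_dominating D && (#|D| == gamma_t)]|.

End Graphs.

From HB Require Import structures.
From mathcomp Require Import all_boot zify.
From Stdlib Require Import Reals Lra.
Set Implicit Arguments. Unset Strict Implicit. Unset Printing Implicit Defensive.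

(* The trees are chains of K gadgets on 22 vertices. In each gadget, 14
   vertices (1, 2 and the middle vertices and leaves of its six pendant paths)
   have pairwise disjoint neighbourhoods inside the gadget, so gamma_t = 14 K.
   Conversely each gadget has 15^2 = 225 total dominating sets of size 14 that
   dominate it on their own, and these combine freely, so Gamma_t >= 225^K.
   With n = 22 K the claimed bound reduces to c^14 (15/7)^7 <= 225, which
   holds for c = 201/200. *)

HB.instance Definition _ := SemiGroup.isComLaw.Build nat minn minnA minnC.

Section Domination.
Variables (T : finType) (e : rel T).

Lemma gamma_t_eq m :
    (exists2 D, total_dominating e D & #|D| = m) ->
    (forall D, total_dominating e D -> m <= #|D|) ->
  gamma_t e = m.
Proof.
move=> [D0 D0tot <-] lb; apply/eqP; rewrite eqn_leq; apply/andP; split.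
  by rewrite /gamma_t (bigD1 D0) //= geq_minl.
apply: (big_ind (fun k => #|D0| <= k)) => [|k l|D /lb] //; first exact: max_card.
by rewrite leq_min => -> ->.
Qed.

Lemma total_dominating_card_ge (S D : {set T}) :
    {in S &, forall s s' u, e s u -> e s' u -> s = s'} ->
    total_dominating e D -> #|S| <= #|D|.
Proof.
move=> disjS /forallP totD.
pose f s := odflt s [pick u in D | e s u].
have f_nbr s : f s \in D /\ e s (f s).
  rewrite /f; case: pickP => [u /andP[] //|none].
  by have /existsP[u /andP[uD su]] := totD s; move: (none u); rewrite uD su.
have f_inj : {in S &, injective f}.
  move=> s s' sS s'S fss'; apply: disjS (f s) _ _ => //; first by case: (f_nbr s).
  by rewrite fss'; case: (f_nbr s').
rewrite -(card_in_imset f_inj); apply/subset_leq_card/subsetP => _ /imsetP[s _ ->].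
by case: (f_nbr s).
Qed.

Lemma Gamma_t_ge (I : finType) (A : {pred I}) (f : I -> {set T}) :
    injective f ->
    {in A, forall a, total_dominating e (f a) /\ #|f a| = gamma_t e} ->
  #|A| <= Gamma_t e.
Proof.
move=> f_inj fA; rewrite /Gamma_t -(card_imset A f_inj).
apply/subset_leq_card/subsetP => _ /imsetP[a aA ->].
by have [fa_tot fa_card] := fA a aA; rewrite inE fa_tot fa_card eqxx.
Qed.

End Domination.

Section ParentTree.
Variables (T : finType) (par : T -> T) (ht : T -> nat) (root : T).
Hypothesis par_root : par root = root.
Hypothesis ht_par : forall v, v != root -> ht (par v) < ht v.

Definition parent_rel : rel T := fun u v => (u != v) && ((par u == v) || (par v == u)).

Lemma parent_rel_sym : symmetric parent_rel.
Proof. by move=> u v; rewrite /parent_rel eq_sym orbC. Qed.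

Lemma parent_rel_par v : v != root -> parent_rel v (par v).
Proof.
move=> vNroot; rewrite /parent_rel eqxx andbT.
by apply: contraTneq (ht_par vNroot) => <-; rewrite ltnn.
Qed.

Lemma connect_parent_rel_root v : connect parent_rel v root.
Proof.
elim: {v}(ht v) {-2}v (leqnn (ht v)) => [|n IHn] v.
all: case: (eqVneq v root) => [-> _|vNroot]; rewrite ?connect0 //.
  by have := ht_par vNroot; case: (ht v).
move=> le_v_n; apply: connect_trans (connect1 (parent_rel_par vNroot)) (IHn _ _).
by rewrite -ltnS; apply: leq_trans (ht_par vNroot) le_v_n.
Qed.

Lemma parent_rel_connected : connected_graph parent_rel.
Proof.
move=> u v; apply: connect_trans (connect_parent_rel_root u) _.
by rewrite (sym_connect_sym parent_rel_sym) connect_parent_rel_root.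
Qed.

Lemma parent_rel_low_nbr v u : parent_rel v u -> ht u <= ht v -> u = par v.
Proof.
case/andP=> vNu /orP[/eqP <- //|/eqP par_u] le_uv.
case: (eqVneq u root) => [u_root|uNroot].
  by move: vNu; rewrite -par_u u_root par_root eqxx.
by have := ht_par uNroot; rewrite par_u ltnNge le_uv.
Qed.

Lemma parent_rel_acyclic : ~ has_cycle parent_rel.
Proof.
case=> c /and3P[c_uniq c_size c_cycle].
have [c0 c0c] : exists c0, c0 \in c.
  by case: c c_size {c_uniq c_cycle} => // x s _; exists x; exact: mem_head.
have [m mc m_max] := @arg_maxnP _ c0 (mem c) ht c0c.
have [i s c_rot] := rot_to mc.
have : cycle parent_rel (m :: s) by rewrite -c_rot rot_cycle.
have : uniq (m :: s) by rewrite -c_rot rot_uniq.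
have : 2 < size (m :: s) by rewrite -c_rot size_rot.
have low x : x \in s -> ht x <= ht m.
  by move=> xs; apply: m_max; rewrite inE -(mem_rot i) c_rot inE xs orbT.
case: s c_rot low => [|u [|w s]] // _ low _ /and3P[_ uNs _] /= /andP[m_u].
rewrite rcons_path => /and3P[_ _ z_m].
have z_ws : last w s \in w :: s by exact: mem_last.
have u_par : u = par m.
  by apply: parent_rel_low_nbr m_u _; apply: low; exact: mem_head.
have z_par : last w s = par m.
  apply: parent_rel_low_nbr; first by rewrite parent_rel_sym.
  by apply: low; rewrite inE z_ws orbT.
by move: uNs; rewrite u_par -z_par z_ws.
Qed.

Lemma parent_rel_tree : is_tree parent_rel.
Proof.
split; [split | exact: parent_rel_connected | exact: parent_rel_acyclic].
  exact: parent_rel_sym.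
by move=> v; rewrite /parent_rel eqxx.
Qed.

Lemma parent_rel_no_isolated : (exists v, v != root) -> no_isolated parent_rel.
Proof.
case=> v0 v0Nroot v; case: (eqVneq v root) => [->|vNroot].
  have [u uNroot u_min] := @arg_minnP _ v0 (fun u => u != root) ht v0Nroot.
  exists u; rewrite parent_rel_sym.
  suff <- : par u = root by exact: parent_rel_par.
  apply/eqP; apply: contraT => par_uNroot.
  by have := u_min _ par_uNroot; rewrite leqNgt ht_par.
by exists (par v); exact: parent_rel_par.
Qed.

End ParentTree.

Lemma card_set_ord n (P : pred nat) : #|[set l : 'I_n | P l]| = count P (iota 0 n).
Proof.
by rewrite -val_enum_ord count_map cardsE cardE -size_filter /enum_mem filter_predT.
Qed.

Lemma card_set_pair (I J : finType) (A : I -> {set J}) :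
  #|[set v : I * J | v.2 \in A v.1]| = \sum_i #|A i|.
Proof.
pose cnt i j := if j \in A i then 1 else 0.
rewrite -sum1_card big_mkcond (eq_bigr (fun v => cnt v.1 v.2)) => [|[i j] _].
  by rewrite -pair_bigA; apply: eq_bigr => i _; rewrite -sum1_card [RHS]big_mkcond.
by rewrite inE.
Qed.

(* A gadget is the path 0-1-2-3 with the paths 4-5-6, 7-8-9, 10-11-12 hanging
   from 0 and 13-14-15, 16-17-18, 19-20-21 hanging from 3. *)
Definition gadget_par_nat (l : nat) : nat :=
  if (4 <= l) && (l %% 3 == 1) then (if l < 13 then 0 else 3) else l.-1.

Lemma gadget_par_nat_le l : gadget_par_nat l <= l.-1.
Proof. by rewrite /gadget_par_nat; case: ifP => [/andP[le4l _]|//]; case: ifP; lia. Qed.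

Definition gadget_par (l : 'I_22) : 'I_22 := inord (gadget_par_nat l).

Lemma gadget_parE l : gadget_par l = gadget_par_nat l :> nat.
Proof.
rewrite inordK //; apply: leq_ltn_trans (gadget_par_nat_le l) _.
exact: leq_ltn_trans (leq_pred l) (ltn_ord l).
Qed.

Definition gadget_adj : rel nat :=
  fun l x => (l != x) && ((gadget_par_nat l == x) || (gadget_par_nat x == l)).

Definition gadget_packing : seq nat := [:: 1; 2; 5; 6; 8; 9; 11; 12; 14; 15; 17; 18; 20; 21].

Lemma gadget_packing_disjoint l l' x :
    l \in gadget_packing -> l' \in gadget_packing -> x < 22 ->
  gadget_adj l x -> gadget_adj l' x -> l = l'.
Proof.
have check : all (fun l => all (fun l' => all (fun x =>
    gadget_adj l x ==> gadget_adj l' x ==> (l == l'))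
  (iota 0 22)) gadget_packing) gadget_packing by [].
move=> lP l'P x22 lx l'x; apply/eqP.
move/allP/(_ l lP)/allP/(_ l' l'P)/allP/(_ x): check; rewrite mem_iota x22 lx l'x; exact.
Qed.

Definition side := (bool * bool * bool * bool)%type.

(* The sides (a0, .., a3) and (b0, .., b3) tell which of the neighbours
   1, 4, 7, 10 of 0 and 2, 13, 16, 19 of 3 are chosen. The middle vertex of a
   pendant path is always chosen, its leaf iff its first vertex is not; 0 is
   chosen iff 2 is not, and 3 iff 1 is not. *)
Definition choice_mem (c : side * side) : pred nat :=
  let: ((a0, a1, a2, a3), (b0, b1, b2, b3)) := c in
  nth false [:: ~~ b0; a0; b0; ~~ a0; a1; true; ~~ a1; a2; true; ~~ a2; a3; true; ~~ a3;
                b1; true; ~~ b1; b2; true; ~~ b2; b3; true; ~~ b3].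

Lemma choice_mem_count c : count (choice_mem c) (iota 0 22) = 14.
Proof. by case: c => [[[[[] []] []] []] [[[[] []] []] []]]. Qed.

Lemma choice_memK c :
  c = ((choice_mem c 1, choice_mem c 4, choice_mem c 7, choice_mem c 10),
       (choice_mem c 2, choice_mem c 13, choice_mem c 16, choice_mem c 19)).
Proof. by case: c => [[[[a0 a1] a2] a3] [[[b0 b1] b2] b3]]. Qed.

Definition nonzero_side : {set side} := [set~ (false, false, false, false)].

Lemma choice_mem_dominating c l : c \in setX nonzero_side nonzero_side -> l < 22 ->
  exists2 x, x < 22 & choice_mem c x && gadget_adj l x.
Proof.
move=> cN l22.
suff /allP/(_ l) : all (fun l => has (fun x => choice_mem c x && gadget_adj l x)
                                    (iota 0 22)) (iota 0 22).
  by rewrite mem_iota l22 => /(_ isT)/hasP[x]; rewrite mem_iota; exists x.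
by move: cN; rewrite !inE; case: c => [[[[[] []] []] []] [[[[] []] []] []]].
Qed.

Definition vertex K := ('I_K.+1 * 'I_22)%type.

(* Gadget i+1 hangs from vertex 3 of gadget i by its vertex 0. *)
Definition chain_par K (v : vertex K) : vertex K :=
  if v.2 != ord0 then (v.1, gadget_par v.2)
  else if v.1 == ord0 then v else (inord v.1.-1, inord 3).

Definition chain K : rel (vertex K) := parent_rel (@chain_par K).
Arguments chain : clear implicits.

Section Chain.
Variable K : nat.
Implicit Types (i : 'I_K.+1) (l x : 'I_22) (v w : vertex K).

Let root : vertex K := (ord0, ord0).
Let ht v := 22 * v.1 + v.2.

Lemma chain_par_root : chain_par root = root.
Proof. by rewrite /chain_par /root. Qed.

Lemma chain_ht_par v : v != root -> ht (chain_par v) < ht v.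
Proof.
case: v => i l; rewrite /ht /chain_par /=; case: (eqVneq l ord0) => [->|lN0 _] /=.
  case: (eqVneq i ord0) => [-> | iN0 _]; first by rewrite /root eqxx.
  have i_gt0 : 0 < i by case: i iN0 => [[|j] ?].
  rewrite /= !inordK //; last exact: leq_ltn_trans (leq_pred i) (ltn_ord i).
  lia.
rewrite gadget_parE ltn_add2l; apply: leq_ltn_trans (gadget_par_nat_le l) _.
by case: l lN0 => [[|j] ?].
Qed.

Lemma chain_tree : is_tree (chain K).
Proof. exact: parent_rel_tree chain_par_root chain_ht_par. Qed.

Lemma chain_no_isolated : no_isolated (chain K).
Proof. by apply: (parent_rel_no_isolated chain_ht_par); exists (ord0, ord_max). Qed.

Lemma chain_par_gadgetE i l x : l != x -> (chain_par (i, l) == (i, x)) = (gadget_par l == x).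
Proof.
rewrite /chain_par /=; case: (eqVneq l ord0) => [-> xN0|_ _]; last by rewrite xpair_eqE eqxx.
have -> : gadget_par ord0 = ord0 by apply: val_inj; rewrite /= gadget_parE.
rewrite /= (negbTE xN0); case: (eqVneq i ord0) => [_|iN0].
  by rewrite xpair_eqE eqxx (negbTE xN0).
rewrite xpair_eqE; apply/negbTE/nandP; left; apply/eqP => /(congr1 val) /=.
rewrite inordK; last exact: leq_ltn_trans (leq_pred i) (ltn_ord i).
by case: i iN0 => [[|j] ?] //=; lia.
Qed.

Lemma chain_gadgetE i l x : chain K (i, l) (i, x) = gadget_adj l x.
Proof.
case: (eqVneq l x) => [->|lNx]; first by rewrite /chain /parent_rel /gadget_adj !eqxx.
have xNl : x != l by rewrite eq_sym.
rewrite /chain /parent_rel /gadget_adj xpair_eqE eqxx lNx.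
rewrite (chain_par_gadgetE i lNx) (chain_par_gadgetE i xNl).
by rewrite -!(inj_eq val_inj) /= !gadget_parE.
Qed.

Lemma chain_nbr_gadget i l w :
  l != 0 :> nat -> l != 3 :> nat -> chain K (i, l) w -> w.1 = i.
Proof.
case: w => j x lN0 lN3 /andP[_ /orP[] /eqP]; rewrite /chain_par /=.
  by rewrite -(inj_eq val_inj) lN0 => -[->].
case: (eqVneq x ord0) => [-> /=|_ [-> _] //].
case: ifP => _ [_ /esym l_eq]; first by rewrite l_eq in lN0.
by rewrite l_eq inordK in lN3.
Qed.

Definition chain_packing : {set vertex K} :=
  setX [set: 'I_K.+1] [set l : 'I_22 | (l : nat) \in gadget_packing].

Lemma chain_packing_disjoint :
  {in chain_packing &, forall s s' u, chain K s u -> chain K s' u -> s = s'}.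
Proof.
have off_centres (l : 'I_22) :
    (l : nat) \in gadget_packing -> l != 0 :> nat /\ l != 3 :> nat.
  by move=> lP; split; apply: contraTneq lP => ->.
move=> [i l] [i' l']; rewrite !in_setX !in_set /= => lP l'P [j x] su s'u.
have [[lN0 lN3] [l'N0 l'N3]] := (off_centres l lP, off_centres l' l'P).
have /= ji := chain_nbr_gadget lN0 lN3 su; have /= ji' := chain_nbr_gadget l'N0 l'N3 s'u.
subst i i'; rewrite chain_gadgetE in su; rewrite chain_gadgetE in s'u.
by congr pair; apply: val_inj; exact: gadget_packing_disjoint lP l'P (ltn_ord x) su s'u.
Qed.

Lemma chain_total_dominating_card D : total_dominating (chain K) D -> 14 * K.+1 <= #|D|.
Proof.
move=> Dtot; apply: leq_trans (total_dominating_card_ge chain_packing_disjoint Dtot).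
by rewrite cardsX cardsT card_ord card_set_ord mulnC.
Qed.

Definition chain_choice (F : {ffun 'I_K.+1 -> side * side}) : {set vertex K} :=
  [set v | v.2 \in [set l : 'I_22 | choice_mem (F v.1) l]].

Lemma chain_choice_card F : #|chain_choice F| = 14 * K.+1.
Proof.
rewrite /chain_choice (card_set_pair (fun i => [set l : 'I_22 | choice_mem (F i) l])).
rewrite (eq_bigr (fun=> 14)) => [|i _]; last by rewrite card_set_ord choice_mem_count.
by rewrite sum_nat_const card_ord mulnC.
Qed.

Lemma chain_choice_inj : injective chain_choice.
Proof.
move=> F G /setP FG; apply/ffunP => i; rewrite [F i]choice_memK [G i]choice_memK.
have mem_eq n : n < 22 -> choice_mem (F i) n = choice_mem (G i) n.
  by move=> n22; have := FG (i, inord n); rewrite !inE /= inordK.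
by rewrite !mem_eq.
Qed.

Lemma chain_choice_dominating F : F \in ffun_on (setX nonzero_side nonzero_side) ->
  total_dominating (chain K) (chain_choice F).
Proof.
move=> /ffun_onP Fon; apply/forallP => -[i l].
have [x x22 /andP[xF lx]] := choice_mem_dominating (Fon i) (ltn_ord l).
by apply/existsP; exists (i, inord x); rewrite !inE /= inordK // xF chain_gadgetE inordK.
Qed.

Lemma chain_gamma : gamma_t (chain K) = 14 * K.+1.
Proof.
apply: gamma_t_eq => [|D /chain_total_dominating_card //].
exists (chain_choice [ffun=> ((true, true, true, true), (true, true, true, true))]).
  by apply: chain_choice_dominating; apply/ffun_onP => i; rewrite ffunE !inE.
exact: chain_choice_card.
Qed.

Lemma chain_Gamma : expn 225 K.+1 <= Gamma_t (chain K).
Proof.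
pose choices : {pred {ffun 'I_K.+1 -> side * side}} :=
  ffun_on (setX nonzero_side nonzero_side).
have <- : #|choices| = expn 225 K.+1.
  by rewrite card_ffun_on cardsX cardsC1 !card_prod card_bool card_ord.
apply: (Gamma_t_ge (A := choices) chain_choice_inj) => F FN.
by split; [exact: chain_choice_dominating | rewrite chain_choice_card chain_gamma].
Qed.

End Chain.

Lemma INR_muln m n : INR (m * n) = (INR m * INR n)%R.
Proof. exact: mult_INR. Qed.

Lemma INR_expn m n : INR (expn m n) = (INR m ^ n)%R.
Proof. by elim: n => [|n IHn] //; rewrite expnS INR_muln IHn. Qed.

Lemma power_bound k G : 0 < k -> expn 225 k <= G ->
  (Rpower (201 / 200) (INR (14 * k)) *
     Rpower ((INR (22 * k) - INR (14 * k) / 2) / (INR (14 * k) / 2)) (INR (14 * k) / 2)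
   <= INR G)%R.
Proof.
move=> k_gt0 le_G.
have k_pos : (0 < INR k)%R by apply: lt_0_INR; apply/ltP.
have half : (INR (14 * k) / 2 = INR (7 * k))%R by rewrite !INR_muln /=; field.
have ratio : ((INR (22 * k) - INR (7 * k)) / INR (7 * k) = 15 / 7)%R.
  by rewrite !INR_muln /=; field; lra.
rewrite half ratio !Rpower_pow; try lra.
rewrite !pow_mult -Rpow_mult_distr.
apply: Rle_trans (_ : 225 ^ k <= _)%R.
  by apply: pow_incr; split; [apply: Rmult_le_pos; apply: pow_le | simpl]; lra.
apply: Rle_trans (le_INR _ _ (elimT leP le_G)).
by rewrite INR_expn INR_IZR_INZ; apply: Rle_refl.
Qed.

Theorem mainTheorem7 :
  exists c : R, (1 < c)%R /\
    forall N : nat,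
      exists (T : finType) (e : rel T),
        [/\ is_tree e, no_isolated e, (N <= gamma_t e)%N &
          (Rpower c (INR (gamma_t e)) *
             Rpower ((INR #|T| - INR (gamma_t e) / 2) / (INR (gamma_t e) / 2))
                    (INR (gamma_t e) / 2)
           <= INR (Gamma_t e))%R].
Proof.
exists (201 / 200)%R; split; first lra.
move=> N; exists (vertex N), (chain N); split.
- exact: chain_tree.
- exact: chain_no_isolated.
- by rewrite chain_gamma; lia.
have card_vertex : #|{: vertex N}| = 22 * N.+1 by rewrite card_prod !card_ord mulnC.
by rewrite chain_gamma card_vertex; apply: power_bound (chain_Gamma N).
Qed.
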